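(* For every integer $n\ge1$, $$\frac{[(2n)!]^2}{(2n-1)!\,(2n+1)!}=\sum_{k=1}^n\binom{2n}{2k}\frac{2^{2k}B_{2k}}{2n-2k+1}.$$
   Context: Bernoulli numbers $B_n$ are defined by $\frac{t}{e^t-1}=\sum_{n\ge0}B_nt^n/n!$. *)

From HB Require Import structures.
From mathcomp Require Import all_boot all_order all_algebra.
Set Implicit Arguments. Unset Strict Implicit. Unset Printing Implicit Defensive.
Import Order.TTheory GRing.Theory Num.Theory.
Local Open Scope ring_scope.

(* t/(e^t-1) = sum B_n t^n/n!  is equivalent (as formal power series) to
   (sum_n B_n t^n/n!) * (sum_m t^m/(m+1)!) = 1, i.e.
   B_0 = 1 and for n >= 1:  sum_{k=0}^{n} B_k / (k! (n-k+1)!) = 0,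
   i.e.  B_n = - n! * sum_{k<n} B_k / (k! (n-k+1)!).
   bern_seq n = [:: B_0; ...; B_n]. *)
Fixpoint bern_seq (n : nat) : seq rat :=
  match n with
  | 0 => [:: 1]
  | n'.+1 =>
      let s := bern_seq n' in
      rcons s (- (n'.+1)`!%:R *
                 \sum_(k < n'.+1) s`_k / ((k`!)%:R * ((n'.+1 - k).+1`!)%:R))
  end.

Definition bernoulli (n : nat) : rat := nth 0 (bern_seq n) n.

(* Let G(t) = sum_k B_k t^k / k!.  The recursion defining the B_k says
   G(t) (e^t - 1) / t = 1, so G(2t) (e^(2t) - 1) = 2t; multiplying by e^(-t)
   gives (G(2t) + t) (e^t - e^(-t)) = t (e^t + e^(-t)), i.e. G(2t) + t = t coth t.
   Since e^t - e^(-t) is odd, comparing the coefficients of t^(2n+1) involves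
   only the even-index B_(2k) and gives
     sum_(k <= n) 2^(2k) B_(2k) / ((2k)! (2n-2k+1)!) = 1 / (2n)!.
   Multiplying by (2n)! and moving the k = 0 term across, both sides of the
   theorem equal 1 - 1/(2n+1).
   Power series are represented by polynomials compared modulo X^K
   (via take_poly K), and the substitution t |-> c t by p \Po (c *: 'X). *)

From mathcomp Require Import all_boot all_order all_algebra ring.
Set Implicit Arguments. Unset Strict Implicit. Unset Printing Implicit Defensive.
Import GRing.Theory Num.Theory.
Local Open Scope ring_scope.

Lemma sumr_double (V : nmodType) (f : nat -> V) n :
  \sum_(j < n.*2) f j = \sum_(k < n) (f k.*2 + f k.*2.+1).
Proof.
elim: n => [|n IH]; first by rewrite !big_ord0.
by rewrite doubleS !big_ord_recr /= IH addrA.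
Qed.

Section Truncation.
Variable R : comNzRingType.
Implicit Types (p q : {poly R}) (c : R).

Lemma take_polyM K p q :
  take_poly K (p * q) = take_poly K (take_poly K p * take_poly K q).
Proof.
apply/polyP => i; rewrite !coef_take_poly; case: ifP => // iK.
rewrite !coefM; apply: eq_bigr => j _.
rewrite !coef_take_poly (leq_ltn_trans (leq_ord j) iK).
by rewrite (leq_ltn_trans (leq_subr _ _) iK).
Qed.

Lemma take_polyMl K p p' q : take_poly K p = take_poly K p' ->
  take_poly K (p * q) = take_poly K (p' * q).
Proof. by move=> eq_p; rewrite take_polyM eq_p -take_polyM. Qed.

Lemma take_polyMr K p q q' : take_poly K q = take_poly K q' ->
  take_poly K (p * q) = take_poly K (p * q').
Proof. by move=> eq_q; rewrite take_polyM eq_q -take_polyM. Qed.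

Lemma coef_comp_polyZX c p i : (p \Po (c *: 'X))`_i = c ^+ i * p`_i.
Proof.
rewrite comp_polyE; under eq_bigr do rewrite exprZn scalerA.
rewrite coef_sumMXn (eq_bigl (fun j : 'I_ _ => j == i :> nat)) //.
rewrite (big_ord1_eq _ (fun j => p`_j * c ^+ j)) mulrC.
by case: ltnP => // /(nth_default 0) ->; rewrite mulr0.
Qed.

Lemma take_poly_comp_polyZX K c p :
  take_poly K (p \Po (c *: 'X)) = take_poly K p \Po (c *: 'X).
Proof.
apply/polyP => i; rewrite coef_comp_polyZX !coef_take_poly coef_comp_polyZX.
by case: ifP; rewrite ?mulr0.
Qed.

End Truncation.

Section Factorials.
Context {R : numFieldType}.

Lemma natr_fact_neq0 n : n`!%:R != 0 :> R.
Proof. by rewrite pnatr_eq0 -lt0n fact_gt0. Qed.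

Lemma bin_div_fact i j : (j <= i)%N ->
  'C(i, j)%:R / i`!%:R = (j`!%:R)^-1 * ((i - j)`!%:R)^-1 :> R.
Proof.
move=> le_ji; rewrite -(bin_fact le_ji) !natrM invfM mulrA mulfV ?mul1r ?invfM //.
by rewrite pnatr_eq0 -lt0n bin_gt0.
Qed.

Lemma bin_mul_div_succ m j x : (j <= m)%N ->
  'C(m, j)%:R * x / (m - j).+1%:R = m`!%:R * (x / j`!%:R / (m - j).+1`!%:R) :> R.
Proof.
move=> le_jm; rewrite -(bin_fact le_jm) factS !natrM.
by field; rewrite !natr_fact_neq0 addrC natr1 pnatr_eq0.
Qed.

Lemma fact_sq_ratio m : (0 < m)%N ->
  (m`! ^ 2)%:R / (m.-1`! * m.+1`!)%:R = 1 - m`!%:R / m.+1`!%:R :> R.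
Proof.
case: m => // m _; rewrite /= !factS expnS expn1 !natrM.
by field; rewrite !natr_fact_neq0 (addrC 1) natr1 -natrD !pnatr_eq0.
Qed.

End Factorials.

Section Exponential.
Context {R : numFieldType}.

Definition exp_poly K : {poly R} := \poly_(i < K) (i`!%:R)^-1.
Definition expm1_divX K : {poly R} := \poly_(i < K) (i.+1`!%:R)^-1.

Lemma exp_poly_mul_scale K c :
  take_poly K (exp_poly K * (exp_poly K \Po (c *: 'X)))
  = take_poly K (exp_poly K \Po ((1 + c) *: 'X)).
Proof.
apply/polyP => i; rewrite !coef_take_poly; case: ifP => // iK.
rewrite coefM coef_comp_polyZX coef_poly iK addrC exprDn mulr_suml.
apply: eq_bigr => j _; rewrite coef_comp_polyZX !coef_poly.
rewrite (leq_ltn_trans (leq_ord j) iK) (leq_ltn_trans (leq_subr _ _) iK).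
rewrite expr1n mulr1 -[_ *+ 'C(i, j)]mulr_natr -mulrA.
by rewrite bin_div_fact ?leq_ord // mulrCA.
Qed.

Lemma exp_poly_mul_opp K :
  take_poly K (exp_poly K * (exp_poly K \Po (-1 *: 'X))) = take_poly K 1.
Proof.
rewrite exp_poly_mul_scale subrr scale0r comp_poly0r.
case: K => [|K]; first by rewrite !take_poly0l.
by rewrite coef_poly /= invr1.
Qed.

Lemma X_mul_expm1_divX K :
  take_poly K ('X * expm1_divX K) = take_poly K (exp_poly K - 1).
Proof.
apply/polyP => i; rewrite !coef_take_poly; case: ifP => // iK.
rewrite coefXM coefB coefC !coef_poly iK.
by case: i iK => [|i] iK /=; rewrite ?invr1 ?subrr // (ltnW iK) subr0.
Qed.

Lemma coef_exp_poly_sub_opp K m : (m < K)%N ->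
  (exp_poly K - (exp_poly K \Po (-1 *: 'X)))`_m = (odd m)%:R * 2 / m`!%:R.
Proof.
move=> mK; rewrite coefB coef_comp_polyZX coef_poly mK -signr_odd.
by case: (odd m); rewrite /= ?expr1 ?expr0; ring.
Qed.

Lemma coef_exp_poly_add_opp K m : (m < K)%N ->
  (exp_poly K + (exp_poly K \Po (-1 *: 'X)))`_m = (~~ odd m)%:R * 2 / m`!%:R.
Proof.
move=> mK; rewrite coefD coef_comp_polyZX coef_poly mK -signr_odd.
by case: (odd m); rewrite /= ?expr1 ?expr0; ring.
Qed.

End Exponential.

Lemma size_bern_seq n : size (bern_seq n) = n.+1.
Proof. by elim: n => [|n IH] //=; rewrite size_rcons IH. Qed.

Lemma nth_bern_seq n k : (k <= n)%N -> (bern_seq n)`_k = bernoulli k.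
Proof.
elim: n => [|n IH]; first by rewrite leqn0 => /eqP ->.
rewrite leq_eqVlt => /orP [/eqP -> //| lt_kn].
by rewrite /= nth_rcons size_bern_seq lt_kn IH.
Qed.

Lemma bernoulli0 : bernoulli 0 = 1.
Proof. by []. Qed.

Lemma bernoulliS n : bernoulli n.+1 =
  - n.+1`!%:R * \sum_(k < n.+1) bernoulli k / k`!%:R / (n.+1 - k).+1`!%:R.
Proof.
rewrite /bernoulli /= nth_rcons size_bern_seq ltnn eqxx; congr (_ * _).
apply: eq_bigr => k _; rewrite invfM mulrA nth_bern_seq //.
by rewrite -ltnS ltn_ord.
Qed.

Lemma bernoulli_sum n : (0 < n)%N ->
  \sum_(k < n.+1) bernoulli k / k`!%:R / (n - k).+1`!%:R = 0.
Proof.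
case: n => // n _; rewrite big_ord_recr /= subnn bernoulliS.
set S := \sum_(k < n.+1) _.
by rewrite (mulrAC _ S) mulNr mulfV ?natr_fact_neq0 // mulN1r divr1 addrN.
Qed.

Definition bernoulli_egf K : {poly rat} := \poly_(i < K) (bernoulli i / i`!%:R).

Lemma bernoulli_egf_mul K :
  take_poly K (bernoulli_egf K * expm1_divX K) = take_poly K 1.
Proof.
apply/polyP => i; rewrite !coef_take_poly; case: ifP => // iK.
rewrite coefM coefC.
transitivity (\sum_(j < i.+1) bernoulli j / j`!%:R / (i - j).+1`!%:R).
  apply: eq_bigr => j _; rewrite !coef_poly (leq_ltn_trans (leq_ord j) iK).
  by rewrite (leq_ltn_trans (leq_subr _ _) iK).
by case: i iK => [|i] _; rewrite ?big_ord1 ?bernoulli_sum.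
Qed.

Lemma bernoulli_egf_coth K :
  take_poly K (((bernoulli_egf K \Po (2 *: 'X)) + 'X)
               * (exp_poly K - (exp_poly K \Po (-1 *: 'X))))
  = take_poly K ('X * (exp_poly K + (exp_poly K \Po (-1 *: 'X)))).
Proof.
have EEi := @exp_poly_mul_opp rat K.
have GF2 : take_poly K ((bernoulli_egf K \Po (2 *: 'X))
                        * (expm1_divX K \Po (2 *: 'X))) = take_poly K 1.
  rewrite -comp_polyM take_poly_comp_polyZX bernoulli_egf_mul.
  by rewrite -take_poly_comp_polyZX comp_polyC.
have XF2 : take_poly K (2 *: 'X * (expm1_divX K \Po (2 *: 'X)))
           = take_poly K (exp_poly K * exp_poly K - 1 :> {poly rat}).
  rewrite -{1}[2 *: 'X]comp_polyX -comp_polyM take_poly_comp_polyZX X_mul_expm1_divX.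
  rewrite -take_poly_comp_polyZX comp_polyB comp_polyC !raddfB /=.
  by rewrite -(exp_poly_mul_scale K 1) scale1r comp_polyXr.
set E := exp_poly K in EEi XF2 *; set Ei := E \Po _ in EEi *.
set G2 := bernoulli_egf K \Po _ in GF2 *.
have twoX : take_poly K (2 *: 'X) = take_poly K (G2 * (E * E - 1)).
  by rewrite -[2 *: 'X]mulr1 -(take_polyMr _ GF2) mulrCA (take_polyMr _ XF2).
have twoXEi : take_poly K (2 *: 'X * Ei) = take_poly K (G2 * (E - Ei)).
  rewrite (take_polyMl _ twoX) -mulrA mulrBl mul1r -mulrA; apply: take_polyMr.
  by rewrite !raddfB /= (take_polyMr _ EEi) mulr1.
rewrite mulrDl raddfD /= -twoXEi -raddfD; congr take_poly.
by rewrite scaler_nat mulrnAl -mulrnAr mulr2n -mulrDr addrC addrA subrK.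
Qed.

Lemma bernoulli_even_sum n :
  \sum_(0 <= k < n.+1)
    2 ^+ k.*2 * bernoulli k.*2 / (k.*2)`!%:R / (n.*2 - k.*2).+1`!%:R
  = (n.*2)`!%:R^-1.
Proof.
rewrite big_mkord.
have := congr1 (fun p : {poly rat} => p`_n.*2.+1) (bernoulli_egf_coth n.*2.+2).
rewrite !coef_take_poly ltnSn coefXM coef_exp_poly_add_opp // odd_double mul1r.
set A := _ + 'X; set B := exp_poly _ - _.
rewrite coefM -doubleS (sumr_double (fun j => A`_j * B`_(n.*2.+1 - j))) /=.
have term (k : 'I_n.+1) :
    A`_k.*2 * B`_(n.*2.+1 - k.*2) + A`_k.*2.+1 * B`_(n.*2.+1 - k.*2.+1)
    = 2 ^+ k.*2 * bernoulli k.*2 / (k.*2)`!%:R / (n.*2 - k.*2).+1`!%:R * 2.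
  have le_kn : (k.*2 <= n.*2)%N by rewrite leq_double leq_ord.
  rewrite subSS subSn // -doubleB !coef_exp_poly_sub_opp; last 2 first.
  - by rewrite ltnS leqW // leq_double leq_subr.
  - by rewrite !ltnS leq_double leq_subr.
  rewrite oddS !odd_double coefD coef_comp_polyZX coefX coef_poly ltnS ltnW //=.
  rewrite (_ : (k.*2 == 1)%N = false) ?doubleB; last by case: (k : nat).
  by rewrite addr0 !mul0r mulr0 addr0; ring.
rewrite (eq_bigr _ (fun k _ => term k)) -mulr_suml => two_sum.
by apply: (mulIf (_ : 2 != 0 :> rat)) => //; rewrite two_sum mulrC.
Qed.

Theorem mainTheorem20 (n : nat) (hn : (1 <= n)%N) :
  ((n.*2)`! ^ 2)%:R / (((n.*2).-1)`! * ((n.*2).+1)`!)%:R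
  = \sum_(1 <= k < n.+1)
      'C(n.*2, k.*2)%:R * (2 ^ (k.*2))%:R * bernoulli (k.*2)
        / ((n.*2 - k.*2).+1)%:R :> rat.
Proof.
have := bernoulli_even_sum n.
rewrite big_ltn // double0 subn0 expr0 mul1r bernoulli0 mul1r.
move=> /(canRL (addKr _)) even_sum.
rewrite fact_sq_ratio ?double_gt0 // (eq_big_nat _ _ (F2 := fun k => (n.*2)`!%:R *
  (2 ^+ k.*2 * bernoulli k.*2 / (k.*2)`!%:R / (n.*2 - k.*2).+1`!%:R))).
  by rewrite -mulr_sumr even_sum mulrDr mulfV ?natr_fact_neq0 // addrC mulrN.
move=> k /andP[_ lt_kn].
by rewrite natrX -(mulrA _ _ (bernoulli _)) bin_mul_div_succ // leq_double.
Qed.
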